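(* Let $K$ be a $\mathbb{Z}$-field. For all $k,n\in\mathbb{N}$ with $n\geq 1$, the sets $$\{(x,y)\in K^2 \mid \mathrm{ord}\, x=\mathrm{ord}\, y\}\qquad\text{and}\qquad \{x\in K^\times \mid \mathrm{ord}\, x\equiv k \bmod n\}$$ are definable (with parameters from $K$) in the language $\mathcal{L}_{\mathrm{aff}}^{\pi}$.
   Context: A $\mathbb{Z}$-field is a valued field $K$ (valuation $\mathrm{ord}: K^\times\to\Gamma_K$, $\mathrm{ord}\,0=\infty$, valuation ring $R_K$) containing an element $\pi$ of minimal positive valuation, normalized so that $\mathrm{ord}\,\pi=1$, such that $\Gamma_K$ is a $\mathbb{Z}$-group (an ordered abelian group elementarily equivalent to $\mathbb{Z}$, with least positive element $1$; in particular for every $\gamma\in\Gamma_K$ and $n\ge1$ there is a unique $\gamma_n\in\{0,\dots,n-1\}$ with $\gamma\equiv\gamma_n \bmod n\Gamma_K$), and which is equipped with a compatible system of angular component maps $\mathrm{ac}_{\pi^m}:K\to R_K/\pi^mR_K$ ($m\ge1$), multiplicative on $K^\times$ with values in $(R_K/\pi^mR_K)^\times$, with $\mathrm{ac}_{\pi^m}(\pi)=1$, $\mathrm{ac}_{\pi^m}(u)=u \bmod \pi^m$ for units $u$, and $\mathrm{ac}_{\pi^m}(0)=0$. No assumption is made on the residue field, the characteristic, or Henselianity. For $x\in K^\times$ let $\gamma_n(x)\in\{0,\dots,n-1\}$ be the remainder of $\mathrm{ord}\,x$ modulo $n$. For $n,m\ge1$, $\Lambda_{n,m}$ is the quotient of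 $K$ by the equivalence relation: $x\sim y$ iff $x=y=0$, or $x,y\neq0$, $\gamma_n(x)=\gamma_n(y)$ and $\mathrm{ac}_{\pi^m}(x)=\mathrm{ac}_{\pi^m}(y)$; $\rho_{n,m}:K\to\Lambda_{n,m}$ is the quotient map (informally $\rho_{n,m}(x)=\pi^{\gamma_n(x)}\mathrm{ac}_{\pi^m}(x)$). The multi-sorted language $\mathcal{L}_{\mathrm{aff}}^{\pi}$ has a main sort $K$ with symbols $+$, $\cdot_\pi$ (the map $x\mapsto \pi x$) and the binary relation $x\mid y \iff \mathrm{ord}\,x\le \mathrm{ord}\,y$; auxiliary sorts $\Lambda_{n,m}$ (for all $n,m\ge1$) carrying no symbols; and the maps $\rho_{n,m}:K\to\Lambda_{n,m}$. Parameters from $K$ are allowed. *)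

From HB Require Import structures.
From mathcomp Require Import all_boot all_order all_algebra.
Set Implicit Arguments. Unset Strict Implicit. Unset Printing Implicit Defensive.
Import GRing.Theory.
Local Open Scope ring_scope.

(* The value group Gamma is an ordered abelian group axiomatized as a  *)
(* Z-group (Presburger axioms: discretely ordered abelian group with   *)
(* least positive element 1, and division with remainder by every      *)
(* n >= 1); these axioms axiomatize exactly the theory of (Z,+,<,0,1). *)
(* The valuation on K^x is [zv]; ord 0 = oo is handled by [ordv].      *)
(* ac_{pi^m} : K -> R_K / pi^m R_K is represented by a map            *)
(* [zac m] : K -> K with values in R_K (a choice of representatives);  *)
(* equality in R_K/pi^m R_K is congruence modulo pi^m ([congr_pi]).    *)

Record ZField := {
  zK : fieldType;
  zG : zmodType;
  zle : zG -> zG -> Prop;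
  zone : zG;
  zle_refl : forall a, zle a a;
  zle_anti : forall a b, zle a b -> zle b a -> a = b;
  zle_trans : forall a b c, zle a b -> zle b c -> zle a c;
  zle_total : forall a b, zle a b \/ zle b a;
  zle_add : forall a b c, zle a b -> zle (a + c) (b + c);
  zone_pos : zle 0 zone /\ zone <> 0;
  zone_least : forall g, zle 0 g -> g <> 0 -> zle zone g;
  zdivrem : forall (g : zG) (n : nat), (0 < n)%N ->
      exists r : nat, (r < n)%N /\ exists d : zG, g = zone *+ r + d *+ n;
  zv : zK -> zG;
  zv_mul : forall x y : zK, x <> 0 -> y <> 0 -> zv (x * y) = zv x + zv y;
  zv_add : forall x y : zK, x <> 0 -> y <> 0 -> x + y <> 0 ->
      zle (zv x) (zv (x + y)) \/ zle (zv y) (zv (x + y));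
  zv_surj : forall g : zG, exists x : zK, x <> 0 /\ zv x = g;
  zpi : zK;
  zpi_neq0 : zpi <> 0;
  zv_pi : zv zpi = zone;
  zac : nat -> zK -> zK;
  zac_in : forall m x, (1 <= m)%N -> zac m x = 0 \/ zle 0 (zv (zac m x));
  zac_unit : forall m x, (1 <= m)%N -> x <> 0 -> zac m x <> 0 /\ zv (zac m x) = 0;
  zac_mul : forall m x y, (1 <= m)%N -> x <> 0 -> y <> 0 ->
      let d := zac m (x * y) - zac m x * zac m y in
      d = 0 \/ (d <> 0 /\ zle (zone *+ m) (zv d));
  zac_pi : forall m, (1 <= m)%N ->
      let d := zac m zpi - 1 in d = 0 \/ (d <> 0 /\ zle (zone *+ m) (zv d));
  zac_unitE : forall m u, (1 <= m)%N -> u <> 0 -> zv u = 0 ->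
      let d := zac m u - u in d = 0 \/ (d <> 0 /\ zle (zone *+ m) (zv d));
  zac_0 : forall m, (1 <= m)%N ->
      let d := zac m 0 in d = 0 \/ (d <> 0 /\ zle (zone *+ m) (zv d));
  zac_compat : forall m m' x, (1 <= m)%N -> (m <= m')%N ->
      let d := zac m' x - zac m x in d = 0 \/ (d <> 0 /\ zle (zone *+ m) (zv d))
}.

Section ZFieldDefs.
Variable Z : ZField.
Local Notation K := (zK Z).
Local Notation G := (zG Z).

Definition ordv (x : K) : option G := if x == 0 then None else Some (zv x).

Definition zdivides (x y : K) : Prop :=
  y = 0 \/ (x <> 0 /\ y <> 0 /\ zle (zv x) (zv y)).

Definition congr_pi (m : nat) (a b : K) : Prop :=
  a - b = 0 \/ (a - b <> 0 /\ zle (@zone Z *+ m) (zv (a - b))).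

Definition gamma_rem (n : nat) (x : K) (r : nat) : Prop :=
  (r < n)%N /\ exists d : G, zv x = @zone Z *+ r + d *+ n.

Definition lam_eq (n m : nat) (x y : K) : Prop :=
  (x = 0 /\ y = 0) \/
  (x <> 0 /\ y <> 0 /\ (exists r, gamma_rem n x r /\ gamma_rem n y r) /\
   congr_pi m (@zac Z m x) (@zac Z m y)).
End ZFieldDefs.

(* Sorts: K, and Lambda_{n.+1,m.+1} for n m : nat (i.e. all n,m >= 1). *)
(* An element of Lambda_{n,m} is represented by any x : K with         *)
(* rho_{n,m}(x) equal to it; equality of sort Lambda_{n,m} is          *)
(* interpreted as [lam_eq n m], and quantifiers over Lambda_{n,m}      *)
(* range over representatives in K (rho is surjective).                *)

Inductive kterm (K : Type) :=
  | KVar of nat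
  | KPar of K
  | KAdd of kterm K & kterm K
  | KPi of kterm K.

Inductive lterm (K : Type) (n m : nat) :=
  | LVar of nat
  | LRho of kterm K.

Inductive form (K : Type) :=
  | FEqK of kterm K & kterm K
  | FDiv of kterm K & kterm K
  | FEqL (n m : nat) of lterm K n m & lterm K n m
  | FNot of form K
  | FAnd of form K & form K
  | FOr of form K & form K
  | FExK of nat & form K
  | FAllK of nat & form K
  | FExL of nat & nat & nat & form K    (* exists variable i of sort Lambda_{n.+1,m.+1} *)
  | FAllL of nat & nat & nat & form K.

Arguments LVar {K n m}.
Arguments LRho {K n m}.

Section Semantics.
Variable Z : ZField.
Local Notation K := (zK Z).

Definition updK (e : nat -> K) (i : nat) (x : K) : nat -> K :=
  fun j => if j == i then x else e j.

Definition updL (e : nat -> nat -> nat -> K) (n m i : nat) (x : K) :=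
  fun n' m' j => if [&& n' == n, m' == m & j == i] then x else e n' m' j.

Fixpoint keval (eK : nat -> K) (t : kterm K) : K :=
  match t with
  | KVar i => eK i
  | KPar c => c
  | KAdd t1 t2 => keval eK t1 + keval eK t2
  | KPi t1 => @zpi Z * keval eK t1
  end.

Definition leval n m (eK : nat -> K) (eL : nat -> nat -> nat -> K)
  (t : lterm K n m) : K :=
  match t with
  | LVar i => eL n m i
  | LRho s => keval eK s
  end.

Fixpoint sat (eK : nat -> K) (eL : nat -> nat -> nat -> K) (f : form K) : Prop :=
  match f with
  | FEqK t s => keval eK t = keval eK s
  | FDiv t s => zdivides (keval eK t) (keval eK s)
  | FEqL n m a b => @lam_eq Z n.+1 m.+1 (leval eK eL a) (leval eK eL b)
  | FNot g => ~ sat eK eL g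
  | FAnd g h => sat eK eL g /\ sat eK eL h
  | FOr g h => sat eK eL g \/ sat eK eL h
  | FExK i g => exists x, sat (updK eK i x) eL g
  | FAllK i g => forall x, sat (updK eK i x) eL g
  | FExL n m i g => exists x, sat eK (updL eL n m i x) g
  | FAllL n m i g => forall x, sat eK (updL eL n m i x) g
  end.

Definition definable1 (X : K -> Prop) : Prop :=
  exists f : form K, forall eK eL (x : K), X x <-> sat (updK eK 0 x) eL f.

Definition definable2 (X : K -> K -> Prop) : Prop :=
  exists f : form K, forall eK eL (x y : K),
    X x y <-> sat (updK (updK eK 0 x) 1 y) eL f.
End Semantics.

From Pilot Require Import Defs.
From mathcomp Require Import all_boot all_order all_algebra.
Set Implicit Arguments. Unset Strict Implicit. Unset Printing Implicit Defensive.
Local Open Scope ring_scope.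
Import GRing.Theory.

(* - ord x = ord y  iff  x | y and y | x, so the first set is defined
     quantifier-free by the divisibility relation.
   - Fix c with ord c = k.  An element x is nonzero with ord x = k mod n
     iff some y with ord y = ord x satisfies rho_{n,1}(y) = rho_{n,1}(c):
     the condition on gamma_n is exactly the congruence, and the angular
     component is no obstruction, because multiplying x by a unit u of the
     valuation ring keeps ord x and multiplies ac_pi(x) by u mod pi, so
     ac_pi can be adjusted freely (lemma [same_ord_prescribed_ac]). *)

Section ValuationFacts.
Variable Z : ZField.
Local Notation K := (zK Z).
Local Notation G := (zG Z).

Definition at_least (g : G) (a : K) : Prop :=
  a = 0 \/ (a <> 0 /\ zle g (zv a)).

Lemma congr_piE m (a b : K) : congr_pi m a b <-> at_least (zone Z *+ m) (a - b).
Proof. by []. Qed.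

Lemma at_leastD g a b : at_least g a -> at_least g b -> at_least g (a + b).
Proof.
move=> [->|[a0 ha]]; first by rewrite add0r.
move=> [->|[b0 hb]]; first by rewrite addr0; right.
have [ab0|/eqP ab0] := eqVneq (a + b) 0; first by left.
right; split => //.
by case: (zv_add a0 b0 ab0) => h; [apply: zle_trans ha h | apply: zle_trans hb h].
Qed.

Lemma at_leastMunit g w d : w <> 0 -> zv w = 0 -> at_least g d -> at_least g (w * d).
Proof.
move=> w0 vw [->|[d0 hd]]; first by rewrite mulr0; left.
right; split; first by apply/eqP; rewrite mulf_neq0 //; apply/eqP.
by rewrite zv_mul // vw add0r.
Qed.

(* Any residue angular component can be realised in any valuation:
   for x, c nonzero there is y with ord y = ord x and ac_pi y = ac_pi c.
   Take y = x u with the unit u = ac_pi(c) / ac_pi(x). *)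
Lemma same_ord_prescribed_ac (x c : K) : x <> 0 -> c <> 0 ->
  exists y, y <> 0 /\ zv y = zv x /\ congr_pi 1 (zac 1 y) (zac 1 c).
Proof.
move=> x0 c0.
have [ax0 vax] := @zac_unit Z 1 x isT x0.
have [ac0 vac] := @zac_unit Z 1 c isT c0.
set ax := zac 1 x in ax0 vax *; set ac := zac 1 c in ac0 vac *.
pose u := ac / ax.
have u0 : u <> 0 by apply/eqP; rewrite mulf_neq0 ?invr_eq0; apply/eqP.
have uax : u * ax = ac by rewrite /u divfK //; apply/eqP.
have vu : zv u = 0 by move: (zv_mul u0 ax0); rewrite uax vac vax addr0.
have y0 : x * u <> 0 by apply/eqP; rewrite mulf_neq0 //; apply/eqP.
exists (x * u); split => //; split; first by rewrite zv_mul // vu addr0.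
(* ac(xu) - ac(c) = [ac(xu) - ac(x) ac(u)] + ac(x) [ac(u) - u] *)
apply/congr_piE; have -> : zac 1 (x * u) - ac =
    (zac 1 (x * u) - zac 1 x * zac 1 u) + ax * (zac 1 u - u).
  by rewrite mulrBr addrA subrK [ax * u]mulrC uax.
apply: at_leastD; first exact: (@zac_mul Z 1 x u isT x0 u0).
exact/at_leastMunit/(@zac_unitE Z 1 u isT u0 vu).
Qed.

Lemma congr_ord_gamma_rem (n k : nat) (x c : K) : (0 < n)%N ->
  zv c = zone Z *+ k ->
  (exists d : G, zv x = zone Z *+ k + d *+ n) <->
  (exists r, gamma_rem n x r /\ gamma_rem n c r).
Proof.
move=> n0 vc; split.
  move=> [d hd].
  have [r [rn [d0 hd0]]] := zdivrem (zv x) n0.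
  exists r; split; split => //; first by exists d0.
  by exists (d0 - d); rewrite vc mulrnBl addrA -hd0 hd addrK.
move=> [r [[_ [d1 e1]] [_ [d2 e2]]]].
exists (d1 - d2); rewrite e1 mulrnBl -vc e2.
by rewrite -addrA [d2 *+ _ + _]addrC subrK.
Qed.

Lemma ordv_eq_zdivides (x y : K) :
  ordv x = ordv y <-> zdivides x y /\ zdivides y x.
Proof.
rewrite /ordv /zdivides.
have [->|/eqP x0] := eqVneq x 0; have [->|/eqP y0] := eqVneq y 0 => //=.
- by split => // _; split; left.
- by split => // -[[|[]]].
- by split => // -[_ [|[]]].
- split.
    by case=> e; split; right; rewrite e; do !split => //; apply: zle_refl.
  case=> [[//|[_ [_ h1]]]] [//|[_ [_ h2]]].
  by rewrite (zle_anti h1 h2).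
Qed.
End ValuationFacts.

Definition same_ord_form (T : Type) (i j : nat) : Defs.form T :=
  FAnd (FDiv (KVar _ i) (KVar _ j)) (FDiv (KVar _ j) (KVar _ i)).

Lemma sat_same_ord_form (Z : ZField) eK eL (i j : nat) :
  sat eK eL (same_ord_form (zK Z) i j) <-> ordv (eK i) = ordv (eK j).
Proof. by rewrite /same_ord_form /=; split => /ordv_eq_zdivides. Qed.

Theorem mainTheorem1 (Z : ZField) (k n : nat) (hn : (1 <= n)%N) :
  definable2 (fun x y : zK Z => ordv x = ordv y) /\
  definable1 (fun x : zK Z => x <> 0 /\
     exists d : zG Z, zv x = @zone Z *+ k + d *+ n).
Proof.
split.
  exists (same_ord_form (zK Z) 0 1) => eK eL x y.
  exact: iff_sym (sat_same_ord_form _ _ 0 1).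
case: n hn => // n _.
have [c [c0 vc]] := zv_surj (zone Z *+ k).
(* exists y, ord y = ord x /\ rho_{n,1}(y) = rho_{n,1}(c) *)
exists (FExK 1 (FAnd (same_ord_form (zK Z) 0 1)
                     (@FEqL _ n 0 (LRho (KVar _ 1)) (LRho (KPar c))))).
move=> eK eL x /=; split.
  move=> [x0 /(congr_ord_gamma_rem x _ vc) [//|r [gx gc]]].
  have [y [y0 [vy acy]]] := same_ord_prescribed_ac x0 c0.
  exists y; split.
    apply/ordv_eq_zdivides; rewrite /updK /= /ordv.
    by rewrite (negPf (introN eqP x0)) (negPf (introN eqP y0)) vy.
  right; rewrite /updK /=; split=> //; split=> //; split=> //.
  by exists r; rewrite /gamma_rem vy.
move=> [y [/ordv_eq_zdivides ord_xy]]; rewrite /updK /= in ord_xy *.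
case=> [[_ c0']|[y0 [_ [[r [gy gc]] _]]]] //.
move: ord_xy; rewrite /ordv (negPf (introN eqP y0)).
have [//|/eqP x0 [vx]] := eqVneq x 0.
split => //; apply/(congr_ord_gamma_rem x _ vc) => //.
by exists r; rewrite /gamma_rem vx.
Qed.
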